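(* Let $G$ be a strongly connected digraph with at least two vertices. Then for every arc $(v,w)$ of $G$ there exists an arc $(a,b)$ of $G$ that is a good arc for $(v,w)$.
   Context: Digraphs may have loops but no multiple arcs; paths are directed, without repeated vertices, and a path from a vertex to itself may have length $0$. For a set or element $X$ of arcs, $G\setminus X$ is the digraph obtained by removing $X$. Given arcs $(a,b)$ and $(v,w)$ of $G$, $(a,b)$ is a good arc for $(v,w)$ if: (i) $b\neq w$; (ii) for every vertex $u\neq w$, $G\setminus(a,b)$ has a path from $u$ to $v$; (iii) for every vertex $u$, either $G\setminus(a,b)$ has a path from $w$ to $u$, or $G$ has a path from $w$ to $u$ that contains the arc $(a,b)$ and such that every vertex of its subpath from $b$ to $u$ has in-degree one in $G$. *)

(* A digraph is a finite vertex type T with an arc relation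
   e : rel T (loops allowed, no multiple arcs: (x,y) is an arc iff e x y). *)
From mathcomp Require Import all_boot.
Set Implicit Arguments.
Unset Strict Implicit.
Unset Printing Implicit Defensive.

Section Digraphs.
Variable T : finType.

Definition del_arc (e : rel T) (a b : T) : rel T :=
  fun x y => e x y && ((x, y) != (a, b)).

(* Length 0 (p = [::]) is allowed, giving a path from x to x. *)
Definition is_dpath (e : rel T) (x y : T) (p : seq T) : bool :=
  [&& path e x p, uniq (x :: p) & last x p == y].

Definition has_dpath (e : rel T) (x y : T) : Prop :=
  exists p, is_dpath e x y p.

Definition strongly_connected (e : rel T) : Prop :=
  forall x y : T, has_dpath e x y.

(* in-degree of y in G (a loop at y counts as an in-arc). *)
Definition indeg (e : rel T) (y : T) : nat := #|[set x | e x y]|.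

Definition good_arc (e : rel T) (a b v w : T) : Prop :=
  [/\ b != w,
      (forall u, u != w -> has_dpath (del_arc e a b) u v) &
      (forall u, has_dpath (del_arc e a b) w u \/
         exists p, is_dpath e w u p /\
           exists p1 p2, w :: p = p1 ++ a :: b :: p2 /\
             all (fun z => indeg e z == 1) (b :: p2))].
End Digraphs.

From mathcomp Require Import all_boot.

(* If deleting some arc (a,b) with b <> w keeps G strongly connected, that arc
   is good.  Otherwise grow a set U containing w, strongly connected by its own
   arcs, starting from {w} and adding ears: paths p0 -> b -> ... -> pe leaving
   and re-entering U (the first ear being the cycle through (v,w) when v is not
   in U).  When an ear finally covers all vertices outside U, each of its
   interior vertices has in-degree one, since any other arc into it could be
   deleted without losing strong connectivity.  Deleting the first arc (p0,b)
   of this ear leaves every vertex a path to v through the rest of the ear, and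
   w still reaches U; the ear itself is reached from w through p0 along
   in-degree-one vertices. *)

Set Implicit Arguments.
Unset Strict Implicit.
Unset Printing Implicit Defensive.

Section Paths.
Variable T : finType.
Implicit Types (e D : rel T) (U : {set T}) (a b c x y z : T) (p : seq T).

Lemma has_dpathP e x y : has_dpath e x y <-> connect e x y.
Proof.
split=> [[p /and3P[ep _ /eqP <-]] | /connectP[p ep ->]].
  by apply/connectP; exists p.
by have [p' ep' up' _] := shortenP ep; exists p'; rewrite /is_dpath ep' up' eqxx.
Qed.

Lemma strongly_connectedP e :
  reflect (strongly_connected e) [forall x, forall y, connect e x y].
Proof.
apply: (iffP forallP) => [sc x y | sc x]; last by apply/forallP => y; apply/has_dpathP.
by apply/has_dpathP; apply: (forallP (sc x)).
Qed.

Lemma connect_subrel e D : subrel e D -> subrel (connect e) (connect D).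
Proof. by move=> eD; apply: connect_sub => x y /eD; apply: connect1. Qed.

Lemma connect_to_last e c p x : path e c p -> x \in c :: p -> connect e x (last c p).
Proof.
move=> ep xp; case/splitPl: p / xp ep => p1 p2 <-.
rewrite cat_path last_cat => /andP[_ /path_connect].
by apply; apply: mem_last.
Qed.

Lemma is_dpath_cat e x y z p q :
  is_dpath e x y p -> is_dpath e y z q -> ~~ has (mem (x :: p)) q ->
  is_dpath e x z (p ++ q).
Proof.
case/and3P=> ep up /eqP yp /and3P[eq /andP[_ uq] /eqP zq] pq.
rewrite /is_dpath cat_path last_cat yp ep eq -cat_cons cat_uniq up pq.
by rewrite [uniq q]uq zq eqxx.
Qed.

Lemma path_del_arc e a b c p : path e c p -> b \notin p -> path (del_arc e a b) c p.
Proof.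
elim: p c => //= d p IHp c /andP[ecd ep]; rewrite inE negb_or => /andP[bd bp].
by rewrite IHp // andbT /del_arc ecd; apply: contraNneq bd => -[_ ->].
Qed.

Lemma path_del_arc_split e a b c p1 p2 :
  path e c (p1 ++ b :: p2) -> b \notin p1 ++ p2 -> a != last c p1 ->
  path (del_arc e a b) c (p1 ++ b :: p2).
Proof.
rewrite mem_cat negb_or !cat_path /= => /and3P[ep1 eb ep2] /andP[bp1 bp2] a_last.
rewrite path_del_arc // path_del_arc // andbT /del_arc eb.
by apply: contraNneq a_last => -[->].
Qed.

Definition induced e U : rel T := fun x y => [&& x \in U, y \in U & e x y].

Definition strongly_connected_on e U :=
  {in U &, forall x y, connect (induced e U) x y}.

Lemma path_induced_sub e U c p : path (induced e U) c p -> {subset p <= U}.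
Proof.
elim: p c => //= d p IHp c /andP[/and3P[_ dU _] /IHp pU] x.
by rewrite inE => /orP[/eqP -> | /pU].
Qed.

Lemma connect_exit_arc e U x y : connect e x y -> x \in U -> y \notin U ->
  exists a b, [/\ a \in U, b \notin U & e a b].
Proof.
case/connectP=> p + ->; elim: p x => [|z p IHp] x /=; first by move=> _ ->.
case/andP=> exz ep xU; have [zU | zU] := boolP (z \in U); first exact: IHp.
by exists x, z.
Qed.

Lemma dpath_first_entry e U b y p : is_dpath e b y p -> b \notin U -> y \in U ->
  exists S pe, [/\ path e b (rcons S pe), uniq (b :: rcons S pe), pe \in U
                   & {in b :: S, forall x, x \notin U}].
Proof.
case/and3P=> ep up /eqP <- bU yU.
have hasU: has (mem U) p.
  apply/hasP; exists (last b p) => //.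
  by move: (mem_last b p); rewrite inE => /orP[/eqP lb | //]; rewrite -lb yU in bU.
case/split_find: hasU ep up => pe S p2 peU SU; exists S, pe.
rewrite cat_path -cat_cons cat_uniq in ep up.
case/andP: ep => ep _; case/andP: up => up _; split=> //.
move=> x; rewrite inE => /orP[/eqP -> // | xS].
by apply: contra SU => xU; apply/hasP; exists x.
Qed.

End Paths.

Definition is_ear (T : finType) (e : rel T) (U : {set T}) (p0 b : T)
    (S : seq T) (pe : T) :=
  [/\ p0 \in U, pe \in U, path e p0 (b :: rcons S pe), uniq (b :: rcons S pe)
    & {in b :: S, forall x, x \notin U}].

Section Ear.
Variables (T : finType) (e : rel T) (U : {set T}) (p0 b pe : T) (S : seq T).
Hypotheses (scU : strongly_connected_on e U) (ear : is_ear e U p0 b S pe).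

Let p0U : p0 \in U. Proof. by case: ear. Qed.
Let peU : pe \in U. Proof. by case: ear. Qed.
Let ear_path : path e p0 (b :: rcons S pe). Proof. by case: ear. Qed.
Let ear_uniq : uniq (b :: rcons S pe). Proof. by case: ear. Qed.
Let ear_out : {in b :: S, forall x, x \notin U}. Proof. by case: ear. Qed.
Let bU : b \notin U. Proof. by rewrite ear_out ?mem_head. Qed.

Let mem_ear x : x \in b :: S -> x \in b :: rcons S pe.
Proof. by move=> xS; rewrite -rcons_cons mem_rcons inE xS orbT. Qed.

Lemma ear_connect D : subrel (induced e U) D -> path D p0 (b :: rcons S pe) ->
  {in U :|: [set x in b :: S] &, forall x y, connect D x y}.
Proof.
move=> UD pD; have inU x y : x \in U -> y \in U -> connect D x y.
  by move=> xU yU; apply: connect_subrel UD _ _ (scU xU yU).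
have on_ear x : x \in b :: S -> x \in p0 :: b :: rcons S pe.
  by move/mem_ear => xS; rewrite inE xS orbT.
move=> x y; rewrite !inE => xUS yUS.
have x_pe : connect D x pe.
  case/orP: xUS => [/inU -> // | /on_ear xS].
  by have := connect_to_last pD xS; rewrite -rcons_cons last_rcons.
have p0_y : connect D p0 y.
  by case/orP: yUS => [/(inU _ _ p0U) // | /on_ear /(path_connect pD)].
exact: connect_trans x_pe (connect_trans (inU _ _ peU p0U) p0_y).
Qed.

Lemma ear_strongly_connected_on :
  strongly_connected_on e (U :|: [set x in b :: S]).
Proof.
apply: ear_connect => [x y /and3P[xU yU exy] | ].
  by rewrite /induced !inE xU yU exy.
apply: (sub_in_path (P := [pred x | (x \in U) || (x \in b :: S)]) _ _ ear_path).
- by move=> x y; rewrite /induced !inE => -> -> ->.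
- apply/allP => x; rewrite -rcons_cons !inE mem_rcons !inE /=.
  by case/or4P=> [/eqP -> | /eqP -> | /eqP -> | ->]; rewrite ?p0U ?peU ?eqxx ?orbT.
Qed.

Lemma ear_dpath_to u : u \in b :: S ->
  exists2 p, is_dpath e p0 u (b :: p) & {subset b :: p <= b :: S}.
Proof.
have p0bS : p0 \notin b :: S by apply: contraL p0U => /ear_out.
move: ear_path ear_uniq p0bS; rewrite -rcons_cons rcons_path rcons_uniq.
case/andP=> pS _ /andP[_ uS] p0bS; rewrite inE => /predU1P[-> | uS'].
  have p0b : p0 != b by apply: contraNneq bU => <-.
  exists [::] => [|x]; last by rewrite inE => /eqP ->; apply: mem_head.
  by rewrite /is_dpath /= inE p0b eqxx !andbT; case/andP: pS.
case/splitPr: uS' pS uS p0bS => q1 q2 pS uS p0bS.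
have pre : prefix (b :: rcons q1 u) (b :: q1 ++ u :: q2).
  by rewrite -cat_rcons -cat_cons prefix_prefix.
exists (rcons q1 u); last by move=> x; rewrite -cat_rcons -cat_cons mem_cat => ->.
rewrite /is_dpath (prefix_path pre pS) last_cons last_rcons eqxx andbT.
apply: (@prefix_uniq _ _ (p0 :: b :: q1 ++ u :: q2)).
  by rewrite prefix_cons eqxx pre.
by rewrite cons_uniq p0bS uS.
Qed.

Hypothesis cover : U :|: [set x in b :: S] = setT.

Let in_ear_span x : (x \in U) || (x \in b :: S).
Proof. by have := in_setT x; rewrite -cover !inE. Qed.

Lemma ear_cover_strongly_connected D :
  subrel (induced e U) D -> path D p0 (b :: rcons S pe) -> strongly_connected D.
Proof.
by move=> UD pD x y; apply/has_dpathP; apply: ear_connect; rewrite ?cover ?inE.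
Qed.

Lemma ear_indeg :
  (forall x y, e x y -> y \notin U -> ~ strongly_connected (del_arc e x y)) ->
  {in b :: S, forall y, indeg e y = 1}.
Proof.
move=> no_removable y yS; have yU := ear_out yS.
have [p1 [p2 Ep]] : exists p1 p2, b :: rcons S pe = p1 ++ y :: p2.
  by case/splitPr: (mem_ear yS) => p1 p2; exists p1, p2.
have ep := ear_path; have up := ear_uniq; rewrite Ep in ep up.
rewrite /indeg (_ : [set x | e x y] = [set last p0 p1]) ?cards1 //.
apply/setP => x; rewrite !inE; apply/idP/eqP => [exy | ->]; last first.
  by move: ep; rewrite cat_path => /andP[_ /andP[]].
apply/eqP/contraT => x_last; case: (no_removable x y exy yU).
apply: ear_cover_strongly_connected.
  move=> c d /and3P[_ dU cd]; rewrite /del_arc cd.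
  by apply: contraNneq yU => -[_ <-].
rewrite Ep; apply: path_del_arc_split => //.
by move: up; rewrite -cat1s uniq_catCA cat1s => /andP[].
Qed.

Lemma ear_good_arc v w : w \in U -> {in b :: S, forall y, indeg e y = 1} ->
  v \in U \/ U = [set w] /\ v = last b S -> good_arc e p0 b v w.
Proof.
move=> wU indeg1 vU; set D := del_arc e p0 b.
have UD : subrel (induced e U) D.
  move=> x y /and3P[_ yU exy]; rewrite /D /del_arc exy.
  by apply: contraNneq bU => -[_ <-].
have inU x y : x \in U -> y \in U -> connect D x y.
  by move=> xU yU; apply: connect_subrel UD _ _ (scU xU yU).
have pD : path D b (rcons S pe).
  by apply: path_del_arc; [case/andP: ear_path | case/andP: ear_uniq].
split.
- by apply: contraNneq bU => ->.
- move=> u uw; apply/has_dpathP; case: vU => [vU | [Uw ->]].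
    case/orP: (in_ear_span u) => [/inU -> // | uS].
    apply: connect_trans (inU _ _ peU vU).
    by have := connect_to_last pD (mem_ear uS); rewrite last_rcons.
  have uS : u \in b :: S.
    by case/orP: (in_ear_span u); rewrite // Uw inE (negPf uw).
  by move: pD; rewrite rcons_path => /andP[pbS _]; apply: connect_to_last pbS uS.
move=> u; case/orP: (in_ear_span u) => [uU | uS].
  by left; apply/has_dpathP/inU.
right; have [r /and3P[wr ur /eqP rp0]] : has_dpath (induced e U) w p0.
  by apply/has_dpathP/scU.
have [p dp pS] := ear_dpath_to uS.
exists (r ++ b :: p); split.
  apply: is_dpath_cat dp _.
    by rewrite /is_dpath (sub_path _ wr) ?ur ?rp0 ?eqxx // => x y /and3P[].
  apply/hasPn => x /pS /ear_out xU; apply: contra xU.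
  by case/predU1P=> [-> // | /(path_induced_sub wr)].
exists (belast w r), p; split; first by rewrite -cat_cons lastI rp0 cat_rcons.
by apply/allP => x /pS /indeg1 ->.
Qed.

End Ear.

Lemma good_arc_of_strongly_connected (T : finType) (e : rel T) a b v w :
  b != w -> strongly_connected (del_arc e a b) -> good_arc e a b v w.
Proof. by move=> bw scD; split=> // u; left; apply: scD. Qed.

Lemma exists_ear (T : finType) (e : rel T) (U : {set T}) w :
  strongly_connected e -> w \in U -> U != setT ->
  exists p0 b S pe, is_ear e U p0 b S pe.
Proof.
move=> scG wU UT; have [x _ xU] : exists2 x, x \in setT & x \notin U.
  by apply/subsetPn; rewrite subTset.
have [a [b [aU bU eab]]] :=
  connect_exit_arc (iffLR (has_dpathP _ _ _) (scG w x)) wU xU.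
have [p dp] := scG b w; have [S [pe [pS uS peU SU]]] := dpath_first_entry dp bU wU.
by exists a, b, S, pe; split; rewrite //= eab.
Qed.

Lemma exists_closing_ear (T : finType) (e : rel T) v w :
  e v w -> v != w -> has_dpath e w v ->
  exists b S, is_ear e [set w] w b S w /\ v = last b S.
Proof.
move=> evw vw [[|b S] /and3P[wbS uwbS /eqP vl]]; first by rewrite -vl eqxx in vw.
exists b, S; split=> //; have wbS' : w \notin b :: S by case/andP: uwbS.
split; rewrite ?set11 //.
- by move: evw; rewrite -vl -rcons_cons rcons_path wbS => ->.
- by rewrite -rcons_cons rcons_uniq wbS'; case/andP: uwbS.
- by move=> x xbS; rewrite inE; apply: contraNneq wbS' => <-.
Qed.

Section EarGrowth.
Variables (T : finType) (e : rel T) (v w : T).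
Hypotheses (scG : strongly_connected e) (evw : e v w).
Hypothesis no_removable_arc :
  forall x y, e x y -> y != w -> ~ strongly_connected (del_arc e x y).

Lemma exists_good_arc_grow U :
  U != setT -> w \in U -> strongly_connected_on e U -> v \in U \/ U = [set w] ->
  exists a b, e a b /\ good_arc e a b v w.
Proof.
have [n] := ubnP #|~: U|; elim: n U => // n IHn U ltUn UT wU scU vU.
have [p0 [b [S [pe [ear vear]]]]] : exists p0 b S pe,
    is_ear e U p0 b S pe /\ (v \in U \/ U = [set w] /\ v = last b S).
  have [vU' | vNU] := boolP (v \in U).
    have [p0 [b [S [pe ear]]]] := exists_ear scG wU UT.
    by exists p0, b, S, pe; split; [|left].
  have Uw : U = [set w] by case: vU => // vU; rewrite vU in vNU.
  have vw : v != w by apply: contraNneq vNU => ->.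
  have [b [S [ear vl]]] := exists_closing_ear evw vw (scG w v).
  by exists w, b, S, w; rewrite Uw; split; [|right].
have eab : e p0 b by case: ear => _ _ /andP[].
have bU : b \notin U by case: ear => _ _ _ _; apply; apply: mem_head.
have [cover | U'T] := eqVneq (U :|: [set x in b :: S]) setT.
  exists p0, b; split=> //; apply: (ear_good_arc scU ear cover wU _ vear).
  apply: (ear_indeg scU ear cover) => x y exy yU; apply: no_removable_arc exy _.
  by apply: contraNneq yU => ->.
apply: (IHn (U :|: [set x in b :: S])) => //.
- rewrite -ltnS (leq_trans _ ltUn) // ltnS proper_card // properC.
  by apply/properP; split; [apply: subsetUl | exists b; rewrite // !inE eqxx orbT].
- by rewrite inE wU.
- exact: ear_strongly_connected_on scU ear.
- by left; case: vear => [vU' | [_ ->]]; rewrite inE ?vU' // inE mem_last orbT.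
Qed.

End EarGrowth.

Theorem lemma1 (T : finType) (e : rel T) :
  1 < #|T| -> strongly_connected e ->
  forall v w : T, e v w -> exists a b : T, e a b /\ good_arc e a b v w.
Proof.
move=> nT scG v w evw.
pose removable (ab : T * T) := [&& e ab.1 ab.2, ab.2 != w &
  [forall x, forall y, connect (del_arc e ab.1 ab.2) x y]].
have [[a b] /and3P[/= eab bw /strongly_connectedP scD] | noR] := pickP removable.
  by exists a, b; split; last exact: good_arc_of_strongly_connected.
apply: (@exists_good_arc_grow _ _ _ _ scG evw _ [set w]); last by right.
- move=> x y exy yw /strongly_connectedP scD.
  by have := noR (x, y); rewrite /removable /= exy yw scD.
- by apply: contraTneq nT => w_all; rewrite -cardsT -w_all cards1.
- exact: set11.
- by move=> x y; rewrite !inE => /eqP -> /eqP ->; apply: connect0.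
Qed.
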